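(* Let $\boldsymbol\pi$ be a prime of $H_{1,2,2}$ and $p$ a rational prime. Then $\boldsymbol\pi$ divides $p$ in $H_{1,2,2}$ (i.e. $p=\boldsymbol\pi\mathbf{a}$ or $p=\mathbf{a}\boldsymbol\pi$ for some $\mathbf{a}\in H_{1,2,2}$) if and only if $N(\boldsymbol\pi)=p$; moreover, if $N(\boldsymbol\pi)=p$ then $\boldsymbol\pi$ divides $p$ both on the left and on the right.
   Context: Let $\mathbf{i},\mathbf{j},\mathbf{k}$ be the standard quaternion units; $\overline{\mathbf{q}}$ is quaternion conjugation and $N(\mathbf{q})=\mathbf{q}\overline{\mathbf{q}}$. $H_{1,2,2}$ is the subring of the quaternions equal to the $\mathbb{Z}$-module generated by $\mathbf{v}_1=1$, $\mathbf{v}_2=\mathbf{i}$, $\mathbf{v}_3=\tfrac12(1+\mathbf{i}+\sqrt2\,\mathbf{j})$, $\mathbf{v}_4=\tfrac12(1+\mathbf{i}+\sqrt2\,\mathbf{k})$. A unit is an element invertible in $H_{1,2,2}$. A prime of $H_{1,2,2}$ is a nonzero nonunit $\boldsymbol\pi$ such that whenever $\boldsymbol\pi=\mathbf{a}\mathbf{b}$ in $H_{1,2,2}$, one of $\mathbf{a},\mathbf{b}$ is a unit. *)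

From HB Require Import structures.
From mathcomp Require Import all_boot all_order all_algebra.
From mathcomp Require Import reals.
Set Implicit Arguments. Unset Strict Implicit. Unset Printing Implicit Defensive.
Import Order.TTheory GRing.Theory Num.Theory.
Local Open Scope ring_scope.

Record quat (R : realType) := Quat { q0 : R; q1 : R; q2 : R; q3 : R }.

Section Quat.
Variable R : realType.

Definition qadd (p q : quat R) : quat R :=
  Quat (q0 p + q0 q) (q1 p + q1 q) (q2 p + q2 q) (q3 p + q3 q).

Definition qscale (r : R) (q : quat R) : quat R :=
  Quat (r * q0 q) (r * q1 q) (r * q2 q) (r * q3 q).

Definition qmul (p q : quat R) : quat R :=
  Quat (q0 p * q0 q - q1 p * q1 q - q2 p * q2 q - q3 p * q3 q)
       (q0 p * q1 q + q1 p * q0 q + q2 p * q3 q - q3 p * q2 q)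
       (q0 p * q2 q - q1 p * q3 q + q2 p * q0 q + q3 p * q1 q)
       (q0 p * q3 q + q1 p * q2 q - q2 p * q1 q + q3 p * q0 q).

Definition qconj (q : quat R) : quat R :=
  Quat (q0 q) (- q1 q) (- q2 q) (- q3 q).

Definition qofR (r : R) : quat R := Quat r 0 0 0.

Definition qzero : quat R := qofR 0.
Definition qone : quat R := qofR 1.

Definition qnorm (q : quat R) : quat R := qmul q (qconj q).

(* generators of H_{1,2,2} *)
Definition v1 : quat R := Quat 1 0 0 0.
Definition v2 : quat R := Quat 0 1 0 0.
Definition v3 : quat R := Quat (1/2) (1/2) (Num.sqrt 2 / 2) 0.
Definition v4 : quat R := Quat (1/2) (1/2) 0 (Num.sqrt 2 / 2).

Definition inH (q : quat R) : Prop :=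
  exists a b c d : int,
    q = qadd (qadd (qscale a%:~R v1) (qscale b%:~R v2))
             (qadd (qscale c%:~R v3) (qscale d%:~R v4)).

Definition Hunit (u : quat R) : Prop :=
  inH u /\ exists v, inH v /\ qmul u v = qone /\ qmul v u = qone.

Definition Hprime (pi : quat R) : Prop :=
  inH pi /\ pi <> qzero /\ ~ Hunit pi /\
  forall a b, inH a -> inH b -> pi = qmul a b -> Hunit a \/ Hunit b.

Definition Hldiv (pi x : quat R) : Prop := exists a, inH a /\ x = qmul pi a.
Definition Hrdiv (pi x : quat R) : Prop := exists a, inH a /\ x = qmul a pi.

End Quat.

From HB Require Import structures.
From mathcomp Require Import all_boot all_order all_algebra.
From mathcomp Require Import reals.
From mathcomp Require Import zify ring.
Import Order.TTheory GRing.Theory Num.Theory.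
Set Implicit Arguments. Unset Strict Implicit. Unset Printing Implicit Defensive.
Local Open Scope ring_scope.

(* If pi divides p, say p = pi a, then N(pi) N(a) = p^2, so N(pi) is 1, p or
   p^2.  N(pi) = 1 would make pi a unit, and N(pi) = p^2 forces N(a) = 1, i.e.
   pi = p u with u a unit.  The latter is impossible because p is itself a norm
   from H_{1,2,2}: by Lagrange's four-square theorem (via Euler's descent)
   p = x conj(x) for some x in H_{1,2,2}, and then p u = x (conj(x) u) splits
   into two factors of norm p, neither a unit.  Conversely, N(pi) = p means
   pi conj(pi) = conj(pi) pi = p. *)

(** * Lagrange's four-square theorem for primes *)

Lemma Fp_sqr_inj_half (p a b : nat) : prime p -> odd p ->
  (a <= p./2)%N -> (b <= p./2)%N -> a%:R ^+ 2 = b%:R ^+ 2 :> 'F_p -> a = b.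
Proof.
move=> p_pr p_odd ha hb.
have p_eq : p = (p./2).*2.+1 by rewrite -[LHS]odd_double_half p_odd.
move/eqP; rewrite eqf_sqr => /orP[/eqP e | /eqP e].
  by move/(congr1 val): e; rewrite /= !val_Fp_nat // !modn_small; lia.
have : (a + b)%:R = 0 :> 'F_p by rewrite natrD e addNr.
by move/(congr1 val); rewrite /= val_Fp_nat // modn_small /=; lia.
Qed.

Lemma exists_dvd_sqr_add_sqr_add1 (p : nat) : prime p -> odd p ->
  exists a b : nat, [/\ (a <= p./2)%N, (b <= p./2)%N & (p %| a * a + b * b + 1)%N].
Proof.
move=> p_pr p_odd; set h := p./2.
have p_eq : p = h.*2.+1 by rewrite -[LHS]odd_double_half p_odd.
have sqr_inj (a b : 'I_h.+1) : a%:R ^+ 2 = b%:R ^+ 2 :> 'F_p -> a = b.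
  by move/(Fp_sqr_inj_half p_pr p_odd (ltn_ord a) (ltn_ord b))/val_inj.
(* Pigeonhole on the p + 1 values a^2 and -1 - b^2 of 'F_p. *)
pose F (x : 'I_h.+1 + 'I_h.+1) : 'F_p :=
  match x with inl a => a%:R ^+ 2 | inr b => -1 - b%:R ^+ 2 end.
have /injectivePn[x [y nxy eF]] : ~~ injectiveb F.
  apply/injectiveP => /leq_card; rewrite card_sum !card_ord Fp_cast //; move: p_eq; clear; lia.
have dvd_sum (a b : 'I_h.+1) : a%:R ^+ 2 = -1 - b%:R ^+ 2 :> 'F_p ->
    exists a b : nat, [/\ (a <= h)%N, (b <= h)%N & (p %| a * a + b * b + 1)%N].
  move=> e; exists a, b; split; [exact: ltn_ord a | exact: ltn_ord b |].
  by rewrite (dvdn_pcharf (pchar_Fp p_pr)) !natrD !natrM -!expr2 e; apply/eqP; ring.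
case: x y nxy eF => [a|a] [b|b] nxy /= eF.
- by rewrite (sqr_inj _ _ eF) eqxx in nxy.
- exact: dvd_sum eF.
- exact: dvd_sum (esym eF).
- by move/addrI/oppr_inj/sqr_inj: eF => e; rewrite e eqxx in nxy.
Qed.

Definition sum4sq (x1 x2 x3 x4 : int) : int := x1 * x1 + x2 * x2 + x3 * x3 + x4 * x4.

Definition is_sum4sq (n : int) : Prop := exists x1 x2 x3 x4, n = sum4sq x1 x2 x3 x4.

Lemma sum4sqM (x1 x2 x3 x4 y1 y2 y3 y4 : int) :
  sum4sq x1 x2 x3 x4 * sum4sq y1 y2 y3 y4 =
  sum4sq (x1 * y1 + x2 * y2 + x3 * y3 + x4 * y4)
         (x1 * y2 - x2 * y1 + x3 * y4 - x4 * y3)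
         (x1 * y3 - x3 * y1 + x4 * y2 - x2 * y4)
         (x1 * y4 - x4 * y1 + x2 * y3 - x3 * y2).
Proof. by rewrite /sum4sq; ring. Qed.

Lemma exists_centered_residue (m x : int) : 0 < m ->
  exists q y, x = m * q + y /\ - m <= 2 * y <= m.
Proof.
move=> m_gt0; set h := (m %/ 2)%Z.
have := divz_eq m 2; have := modz_ge0 m (isT : (2 : int) != 0).
have := ltz_pmod m (isT : (0 : int) < 2).
have := divz_eq (x + h) m; have := modz_ge0 (x + h) (lt0r_neq0 m_gt0).
have := ltz_pmod (x + h) m_gt0.
set q := ((x + h) %/ m)%Z; set y := ((x + h) %% m)%Z.
by exists q, (y - h); lia.
Qed.

Lemma dvdz_of_sqr_eq (m y : int) : y * y = m * m -> (m %| y)%Z.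
Proof.
move=> e; have /eqP : (y - m) * (y + m) = 0 by rewrite mulrDr !mulrBl e; ring.
rewrite mulf_eq0 subr_eq0 addr_eq0 => /orP[] /eqP ->; by rewrite ?rpredN dvdzz.
Qed.

(* One step of Euler's descent: write x_i = m q_i + y_i with centred residues
   y_i, so that sum y_i^2 = m r with 0 <= r <= m. *)
Section Descent.

Variables m p r q1 q2 q3 q4 y1 y2 y3 y4 : int.
Hypothesis m_gt0 : 0 < m.
Hypothesis sum4sq_mp :
  m * p = sum4sq (m * q1 + y1) (m * q2 + y2) (m * q3 + y3) (m * q4 + y4).
Hypothesis sum4sq_mr : sum4sq y1 y2 y3 y4 = m * r.
Hypotheses (y1_centered : - m <= 2 * y1 <= m) (y2_centered : - m <= 2 * y2 <= m)
  (y3_centered : - m <= 2 * y3 <= m) (y4_centered : - m <= 2 * y4 <= m).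

Lemma descent_bounds : 0 <= r <= m.
Proof. by move: sum4sq_mr; rewrite /sum4sq; nia. Qed.

Lemma descent_subr : p - r =
  m * sum4sq q1 q2 q3 q4 + (2 * y1) * q1 + (2 * y2) * q2 + (2 * y3) * q3 + (2 * y4) * q4.
Proof.
apply: (mulfI (lt0r_neq0 m_gt0)); rewrite mulrBr sum4sq_mp -sum4sq_mr /sum4sq; ring.
Qed.

Lemma descent_extremal : r = 0 \/ r = m -> (m %| p)%Z.
Proof.
move=> r_extremal.
have sqr_extremal : [/\ (2 * y1) * (2 * y1) = 0 \/ (2 * y1) * (2 * y1) = m * m,
    (2 * y2) * (2 * y2) = 0 \/ (2 * y2) * (2 * y2) = m * m,
    (2 * y3) * (2 * y3) = 0 \/ (2 * y3) * (2 * y3) = m * m &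
    (2 * y4) * (2 * y4) = 0 \/ (2 * y4) * (2 * y4) = m * m].
  have sum_sqr : (2 * y1) * (2 * y1) + (2 * y2) * (2 * y2) + (2 * y3) * (2 * y3)
      + (2 * y4) * (2 * y4) = 4 * (m * r).
    by rewrite -sum4sq_mr /sum4sq; ring.
  have sqr_le (y : int) : - m <= 2 * y <= m -> 0 <= (2 * y) * (2 * y) <= m * m by nia.
  move: sum_sqr (sqr_le _ y1_centered) (sqr_le _ y2_centered) (sqr_le _ y3_centered)
    (sqr_le _ y4_centered).
  by case: r_extremal => ->; clear=> *; split; lia.
have dvd2y (y : int) : (2 * y) * (2 * y) = 0 \/ (2 * y) * (2 * y) = m * m ->
    (m %| 2 * y)%Z.
  by case=> [/eqP|/dvdz_of_sqr_eq //]; rewrite mulf_eq0 orbb => /eqP ->.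
case: sqr_extremal => /dvd2y d1 /dvd2y d2 /dvd2y d3 /dvd2y d4.
have : (m %| p - r)%Z by rewrite descent_subr; do !apply: rpredD; apply: dvdz_mulr.
by case: r_extremal => ->; rewrite ?subr0 // rpredBr.
Qed.

Lemma descent_is_sum4sq : is_sum4sq (r * p).
Proof.
set w1 := q1 * y1 + q2 * y2 + q3 * y3 + q4 * y4 + r.
set w2 := q1 * y2 - q2 * y1 + q3 * y4 - q4 * y3.
set w3 := q1 * y3 - q3 * y1 + q4 * y2 - q2 * y4.
set w4 := q1 * y4 - q4 * y1 + q2 * y3 - q3 * y2.
exists w1, w2, w3, w4.
(* m w_1, ..., m w_4 are the four components of Euler's product of x and y. *)
have m2_neq0 : m * m != 0 by rewrite mulf_neq0 ?lt0r_neq0.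
apply: (mulfI m2_neq0).
have -> : m * m * (r * p) = (m * p) * (m * r) by ring.
have -> : m * m * sum4sq w1 w2 w3 w4 = sum4sq (m * w1) (m * w2) (m * w3) (m * w4).
  by rewrite /sum4sq; ring.
rewrite sum4sq_mp -sum4sq_mr sum4sqM /w1 mulrDr -sum4sq_mr /w2 /w3 /w4 /sum4sq; ring.
Qed.

End Descent.

Lemma is_sum4sq_descent (m p : int) : 1 < m -> ~~ (m %| p)%Z -> is_sum4sq (m * p) ->
  exists2 r, 0 < r < m & is_sum4sq (r * p).
Proof.
move=> m_gt1 m_ndvd [x1 [x2 [x3 [x4 sum4sq_mp]]]].
have m_gt0 : 0 < m by lia.
have [q1 [y1 [e1 c1]]] := exists_centered_residue x1 m_gt0.
have [q2 [y2 [e2 c2]]] := exists_centered_residue x2 m_gt0.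
have [q3 [y3 [e3 c3]]] := exists_centered_residue x3 m_gt0.
have [q4 [y4 [e4 c4]]] := exists_centered_residue x4 m_gt0.
set r := p - 2 * (x1 * q1 + x2 * q2 + x3 * q3 + x4 * q4) + m * sum4sq q1 q2 q3 q4.
subst x1 x2 x3 x4.
have sum4sq_mr : sum4sq y1 y2 y3 y4 = m * r.
  by rewrite /r mulrDr mulrBr sum4sq_mp /sum4sq; ring.
exists r; last exact: descent_is_sum4sq m_gt0 sum4sq_mp sum4sq_mr.
have /andP[r_ge0 r_le] := descent_bounds m_gt0 sum4sq_mp sum4sq_mr c1 c2 c3 c4.
have r_extremal := descent_extremal m_gt0 sum4sq_mp sum4sq_mr c1 c2 c3 c4.
rewrite !lt_neqAle r_ge0 r_le !andbT; apply/andP; split; apply/eqP => r_eq;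
  move/negP: m_ndvd; apply; apply: r_extremal; by [left | right].
Qed.

Lemma exists_small_multiple_is_sum4sq (p : nat) : prime p -> odd p ->
  exists2 m : nat, (0 < m < p)%N & is_sum4sq (m%:Z * p%:Z).
Proof.
move=> p_pr p_odd.
have [a [b [ha hb p_dvd]]] := exists_dvd_sqr_add_sqr_add1 p_pr p_odd.
have p_eq : p = (p./2).*2.+1 by rewrite -[LHS]odd_double_half p_odd.
set n := (a * a + b * b + 1)%N in p_dvd.
have n_eq : ((n %/ p) * p)%N = n by rewrite divnK.
exists (n %/ p)%N.
  apply/andP; split; first by rewrite divn_gt0 ?prime_gt0 // dvdn_leq // /n addn1.
  rewrite -(ltn_pmul2r (prime_gt0 p_pr)) n_eq /n.
  by move: ha hb p_eq (prime_gt1 p_pr); clear; nia.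
rewrite -PoszM n_eq; exists a, b, 1, 0; rewrite /sum4sq /n; lia.
Qed.

Lemma prime_is_sum4sq (p : nat) : prime p -> is_sum4sq p%:Z.
Proof.
move=> p_pr.
have [->|p_odd] := even_prime p_pr; first by exists 1, 1, 0, 0.
have [m m_bounds] := exists_small_multiple_is_sum4sq p_pr p_odd.
elim/ltn_ind: m m_bounds => m IH /andP[m_gt0 m_lt_p] sum4sq_mp.
have [m_eq1|m_neq1] := eqVneq m 1%N; first by rewrite m_eq1 mul1r in sum4sq_mp.
have m_ndvd : ~~ (m%:Z %| p%:Z)%Z.
  by rewrite dvdzE /=; apply/(prime_nt_dvdP p_pr m_neq1); lia.
have m_gt1 : 1 < m%:Z by rewrite ltz_nat; lia.
have [r /andP[r_gt0 r_lt_m] sum4sq_rp] := is_sum4sq_descent m_gt1 m_ndvd sum4sq_mp.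
have r_eq : r = `|r|%N by rewrite gez0_abs ?ltW.
rewrite r_eq ltz_nat in r_lt_m.
apply: (IH _ r_lt_m); last by rewrite -r_eq.
by rewrite -ltz_nat -r_eq r_gt0 (ltn_trans r_lt_m).
Qed.

(** * The order H_{1,2,2} *)

Section Quaternions.

Variable R : realType.
Implicit Types (p q u : quat R) (r : R).

Lemma quat_eq p q :
  q0 p = q0 q -> q1 p = q1 q -> q2 p = q2 q -> q3 p = q3 q -> p = q.
Proof. by case: p q => [? ? ? ?] [? ? ? ?] /= -> -> -> ->. Qed.

Definition qnormr q : R := q0 q ^+ 2 + q1 q ^+ 2 + q2 q ^+ 2 + q3 q ^+ 2.

Lemma qnormE q : qnorm q = qofR (qnormr q).
Proof. by apply: quat_eq; rewrite /= /qnormr; ring. Qed.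

Lemma qmul_conjl q : qmul (qconj q) q = qofR (qnormr q).
Proof. by apply: quat_eq; rewrite /= /qnormr; ring. Qed.

Lemma qnormrM p q : qnormr (qmul p q) = qnormr p * qnormr q.
Proof. by rewrite /qnormr /=; ring. Qed.

Lemma qnormr_conj q : qnormr (qconj q) = qnormr q.
Proof. by rewrite /qnormr /=; ring. Qed.

Lemma qnormr_qofR r : qnormr (qofR r) = r ^+ 2.
Proof. by rewrite /qnormr /=; ring. Qed.

Lemma qnormr_ge0 q : 0 <= qnormr q.
Proof. by rewrite /qnormr !addr_ge0 ?sqr_ge0. Qed.

Lemma qmulA p q u : qmul p (qmul q u) = qmul (qmul p q) u.
Proof. by apply: quat_eq; rewrite /=; ring. Qed.

Lemma qmul1r q : qmul (qone R) q = q.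
Proof. by apply: quat_eq; rewrite /=; ring. Qed.

Lemma qmulr1 q : qmul q (qone R) = q.
Proof. by apply: quat_eq; rewrite /=; ring. Qed.

Lemma qmul_qofRC r q : qmul (qofR r) q = qmul q (qofR r).
Proof. by apply: quat_eq; rewrite /=; ring. Qed.

Local Notation sqrt2 := (Num.sqrt (2 : R)).

Lemma sqrt2_mulACA (x y : R) : sqrt2 * x * (sqrt2 * y) = 2 * (x * y).
Proof. by rewrite mulrACA -expr2 sqr_sqrtr ?ler0n. Qed.

Definition hcomb (a b c d : int) : quat R :=
  qadd (qadd (qscale a%:~R (v1 R)) (qscale b%:~R (v2 R)))
       (qadd (qscale c%:~R (v3 R)) (qscale d%:~R (v4 R))).

Lemma hcombE (a b c d : int) : hcomb a b c d =
  Quat (a%:~R + c%:~R / 2 + d%:~R / 2) (b%:~R + c%:~R / 2 + d%:~R / 2)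
       (sqrt2 * (c%:~R / 2)) (sqrt2 * (d%:~R / 2)).
Proof. by apply: quat_eq; rewrite /=; field. Qed.

Lemma inHP q : inH q <-> exists a b c d, q = hcomb a b c d.
Proof. by []. Qed.

Lemma inH_conj q : inH q -> inH (qconj q).
Proof.
move=> /inHP[a [b [c [d ->]]]]; apply/inHP; exists (a + c + d), (- b), (- c), (- d).
by rewrite !hcombE; apply: quat_eq; rewrite /= !(intrD, intrN); field.
Qed.

Lemma inH_mul p q : inH p -> inH q -> inH (qmul p q).
Proof.
move=> /inHP[a [b [c [d ->]]]] /inHP[a' [b' [c' [d' ->]]]]; apply/inHP.
exists (a * a' - b * b' - b * c' - b' * d - c * c' - c' * d - d * d'),
  (a * b' + a' * b + b * d' + b' * c + c * d' - c' * d),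
  (a * c' + a' * c - b * d' + b' * d + c * c' + c' * d),
  (a * d' + a' * d + b * c' - b' * c + c' * d + d * d').
by rewrite !hcombE; apply: quat_eq; rewrite /= ?sqrt2_mulACA !(intrD, intrB, intrM); field.
Qed.

Lemma qnormr_hcomb (a b c d : int) : qnormr (hcomb a b c d) =
  (a * a + b * b + (c + d) * (a + b) + c * c + c * d + d * d)%:~R.
Proof. by rewrite hcombE /qnormr /= !expr2 !sqrt2_mulACA !(intrD, intrM); field. Qed.

Lemma inH_qnormr q : inH q -> exists n : nat, qnormr q = n%:R.
Proof.
move=> /inHP[a [b [c [d ->]]]]; have := qnormr_ge0 (hcomb a b c d).
rewrite qnormr_hcomb; set n := (_ + _)%R => n_ge0.
by exists `|n|%N; rewrite -[n in LHS]gez0_abs // -?(ler0z R).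
Qed.

(* (x - u) + (y - u) i + (u + v) v3 + (u - v) v4
   = x + y i + ((u + v) j + (u - v) k) / sqrt 2 *)
Lemma inH_sum4sq (n : int) : is_sum4sq n -> exists2 q, inH q & qnormr q = n%:~R.
Proof.
move=> [x [y [u [v ->]]]]; exists (hcomb (x - u) (y - u) (u + v) (u - v)).
  by apply/inHP; do 4!eexists.
by rewrite qnormr_hcomb /sum4sq; congr _%:~R; ring.
Qed.

Lemma Hunit_qnormr u : inH u -> Hunit u <-> qnormr u = 1.
Proof.
move=> uH; split=> [[_ [v [vH [uv_1 _]]]] | u_1].
  have [[m m_eq] [n n_eq]] := (inH_qnormr uH, inH_qnormr vH).
  have /eqP : (m * n)%N%:R = 1 :> R.
    by rewrite natrM -m_eq -n_eq -qnormrM uv_1 qnormr_qofR expr1n.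
  by rewrite pnatr_eq1 muln_eq1 m_eq => /andP[/eqP -> _].
split=> //; exists (qconj u); split; first exact: inH_conj.
by rewrite qmul_conjl -[qone R]/(qofR 1) -u_1 -qnormE.
Qed.

Lemma Hdiv_of_qnorm pi r : inH pi -> qnorm pi = qofR r ->
  Hldiv pi (qofR r) /\ Hrdiv pi (qofR r).
Proof.
move=> piH norm_r; split; exists (qconj pi); split; try exact: inH_conj.
  by rewrite -norm_r.
by rewrite qmul_conjl -qnormE.
Qed.

Lemma exists_inH_qnormr_prime (p : nat) : prime p -> exists2 x, inH x & qnormr x = p%:R.
Proof. by move/prime_is_sum4sq/inH_sum4sq. Qed.

Lemma not_Hprime_prime_mul_unit (p : nat) u : prime p -> Hunit u ->
  ~ Hprime (qmul (qofR p%:R) u).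
Proof.
move=> p_pr u_unit [_ [_ [_ irreducible]]].
have [uH _] := u_unit; move/(Hunit_qnormr uH): u_unit => u_1.
have [x xH x_p] := exists_inH_qnormr_prime p_pr.
have norm_p_nunit y : inH y -> qnormr y = p%:R -> ~ Hunit y.
  move=> yH y_p /(Hunit_qnormr yH) /eqP.
  by rewrite y_p pnatr_eq1 => /eqP p_1; rewrite p_1 in p_pr.
have [] := irreducible x (qmul (qconj x) u) xH (inH_mul (inH_conj xH) uH).
- by rewrite qmulA -[qmul x _]/(qnorm x) qnormE x_p.
- exact: norm_p_nunit.
- apply: norm_p_nunit; first exact: inH_mul (inH_conj xH) uH.
  by rewrite qnormrM qnormr_conj x_p u_1 mulr1.
Qed.

Lemma nat_mul_eq_prime_sqr (p m n : nat) : prime p -> (m * n = p * p)%N ->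
  [\/ m = 1, m = p | n = 1]%N.
Proof.
move=> p_pr mn_eq; have : (m %| p ^ 2)%N by rewrite -mulnn -mn_eq dvdn_mulr.
case/(dvdn_pfactor _ _ p_pr) => -[|[|[|//]]] _ m_eq; rewrite m_eq in mn_eq *.
- exact: Or31.
- exact: Or32.
- by apply: Or33; move: mn_eq (prime_gt0 p_pr); rewrite -mulnn; nia.
Qed.

Lemma Hprime_dvd_prime pi (p : nat) : Hprime pi -> prime p ->
  Hldiv pi (qofR p%:R) \/ Hrdiv pi (qofR p%:R) ->
  qnormr pi = p%:R \/ exists2 u, Hunit u & pi = qmul (qofR p%:R) u.
Proof.
move=> [piH [_ [pi_nunit _]]] p_pr pi_dvd.
suff [a aH [norm_eq pi_eq]] : exists2 a, inH a &
    qnormr pi * qnormr a = p%:R ^+ 2 /\ (qnormr a = 1 -> pi = qmul (qofR p%:R) (qconj a)).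
  have [[m m_eq] [n n_eq]] := (inH_qnormr piH, inH_qnormr aH).
  move/eqP: norm_eq; rewrite m_eq n_eq -natrM -natrX eqr_nat -mulnn.
  case/eqP/(nat_mul_eq_prime_sqr p_pr) => [m_1 | m_p | n_1].
  - by case: pi_nunit; apply/(Hunit_qnormr piH); rewrite m_eq m_1.
  - by left; rewrite m_p.
  - right; exists (qconj a); last by apply: pi_eq; rewrite n_eq n_1.
    by apply/(Hunit_qnormr (inH_conj aH)); rewrite qnormr_conj n_eq n_1.
case: pi_dvd => -[a [aH p_eq]]; exists a => //; split.
- by rewrite -qnormrM -p_eq qnormr_qofR.
- by move=> a_1; rewrite p_eq -qmulA -[qmul a _]/(qnorm a) qnormE a_1 qmulr1.
- by rewrite mulrC -qnormrM -p_eq qnormr_qofR.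
- by move=> a_1; rewrite qmul_qofRC p_eq qmulA qmul_conjl a_1 qmul1r.
Qed.

End Quaternions.

Theorem lemma42 (R : realType) (pi : quat R) (p : nat) :
  Hprime pi -> prime p ->
  ((Hldiv pi (qofR p%:R) \/ Hrdiv pi (qofR p%:R)) <-> qnorm pi = qofR p%:R) /\
  (qnorm pi = qofR p%:R -> Hldiv pi (qofR p%:R) /\ Hrdiv pi (qofR p%:R)).
Proof.
move=> pi_prime p_pr; have [piH _] := pi_prime.
have dvd_of_norm := @Hdiv_of_qnorm R pi p%:R piH.
split=> //; split=> [/(Hprime_dvd_prime pi_prime p_pr)[norm_p | [u u_unit pi_eq]] |].
- by rewrite qnormE norm_p.
- by case: (not_Hprime_prime_mul_unit p_pr u_unit); rewrite -pi_eq.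
- by case/dvd_of_norm; left.
Qed.
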